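(* Let $n_r, n_d \ge 0$ and $n_c \ge 1$ be integers, let $m_1,\dots,m_{n_c}$ be positive integers, and set $\hat{m}_0=0$, $\hat{m}_h=\sum_{j=1}^h m_j$, and $n = n_r+n_d+\hat{m}_{n_c}$. Let $x^1,\dots,x^k\in\mathbb{R}^n$ be points satisfying, for every $i=1,\dots,k$ and every $h=1,\dots,n_c$, $x^i_{n_r+n_d+j}\in\{0,1\}$ for $j=\hat{m}_{h-1}+1,\dots,\hat{m}_h$ and $\sum_{j=\hat{m}_{h-1}+1}^{\hat{m}_h} x^i_{n_r+n_d+j} = 1$. Let $\phi:\mathbb{R}_+\to\mathbb{R}$ be any function, $\Phi = (\phi(\|x^i-x^j\|))_{i,j=1,\dots,k}$ (Euclidean norm), let $F\in\mathbb{R}^k$, and let $P$ be the $k\times(n+1)$ matrix whose $i$-th row is $((x^i)^\top, 1)$. Let $\hat{P}$ be the $k\times(n+1-n_c)$ matrix obtained from $P$ by deleting the columns corresponding to the coordinates $x_{n_r+n_d+\hat{m}_h}$ for $h=1,\dots,n_c$. If the system $$\begin{pmatrix}\Phi & P\\ P^\top & 0_{(n+1)\times(n+1)}\end{pmatrix}\begin{pmatrix}\lambda\\ \alpha\end{pmatrix} = \begin{pmatrix}F\\ 0_{n+1}\end{pmatrix}$$ has a solution $(\lambda,\alpha)\in\mathbb{R}^k\times\mathbb{R}^{n+1}$, then the system $$\begin{pmatrix}\Phi & \hat{P}\\ \hat{P}^\top & 0_{(n+1-n_c)\times(n+1-n_c)}\end{pmatrix}\begin{pmatrix}\lambda\\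 \alpha\end{pmatrix} = \begin{pmatrix}F\\ 0_{n+1-n_c}\end{pmatrix}$$ has a solution $(\lambda,\alpha)\in\mathbb{R}^k\times\mathbb{R}^{n+1-n_c}$.
   Context: This is the setting of radial basis function interpolation with a polynomial tail of degree $d=1$ (e.g. cubic $\phi(r)=r^3$ or thin plate spline $\phi(r)=r^2\log r$), where the interpolant is $s(x)=\sum_i\lambda_i\phi(\|x-x^i\|)+\alpha^\top(x,1)$ and $F$ is the vector of function values at the interpolation points. The last $\hat{m}_{n_c}$ coordinates are the unary (one-hot) encodings of $n_c$ categorical variables, the $h$-th having $m_h$ possible values. *)

From HB Require Import structures.
From mathcomp Require Import all_boot all_order all_algebra.
From mathcomp Require Import reals.
Set Implicit Arguments. Unset Strict Implicit. Unset Printing Implicit Defensive.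
Import Order.TTheory GRing.Theory Num.Theory.
Local Open Scope ring_scope.

(* \hat m_h = m_1 + ... + m_h  (1-based indexing of m; \hat m_0 = 0) *)
Definition mhat (m : nat -> nat) (h : nat) : nat := (\sum_(1 <= j < h.+1) m j)%N.

Definition eucl_norm (R : rcfType) (n : nat) (v : 'rV[R]_n) : R :=
  Num.sqrt (\sum_(l < n) v 0 l ^+ 2).

Definition Phi_mat (R : rcfType) (k n : nat) (phi : R -> R)
  (x : 'I_k -> 'rV[R]_n) : 'M[R]_k :=
  \matrix_(i, j) phi (eucl_norm (x i - x j)).

Definition P_mat (R : rcfType) (k n : nat) (x : 'I_k -> 'rV[R]_n) : 'M[R]_(k, n + 1) :=
  row_mx (\matrix_(i, l) x i 0 l) (const_mx 1).

(* Column c (0-based) of P is deleted iff it corresponds to the coordinate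
   x_{nr+nd+\hat m_h} (1-based) for some h = 1..nc, i.e. c = nr+nd+\hat m_h - 1. *)
Definition deleted_col (nr nd nc : nat) (m : nat -> nat) (N : nat) (c : 'I_N) : bool :=
  [exists h : 'I_nc, nat_of_ord c == (nr + nd + mhat m h.+1 - 1)%N].

Definition kept_cols (nr nd nc : nat) (m : nat -> nat) (N : nat) : pred 'I_N :=
  fun c => ~~ deleted_col nr nd nc m c.

Definition Phat_mat (R : rcfType) (nr nd nc : nat) (m : nat -> nat) (k N : nat)
  (P : 'M[R]_(k, N)) : 'M[R]_(k, #|@kept_cols nr nd nc m N|) :=
  colsub (fun j => @enum_val _ (@kept_cols nr nd nc m N) j) P.

Definition rbf_solvable (R : rcfType) (k p : nat) (Phi : 'M[R]_k) (Q : 'M[R]_(k, p))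
  (F : 'cV[R]_k) : Prop :=
  exists (lam : 'cV[R]_k) (alpha : 'cV[R]_p),
    block_mx Phi Q Q^T 0 *m col_mx lam alpha = col_mx F 0.

From HB Require Import structures.
From mathcomp Require Import all_boot all_order all_algebra.
From mathcomp Require Import reals zify.

Set Implicit Arguments.
Unset Strict Implicit.
Unset Printing Implicit Defensive.
Import Order.TTheory GRing.Theory Num.Theory.
Local Open Scope ring_scope.

(* In every group of one-hot coordinates the entries sum to 1, so the deleted
   (last) coordinate column equals the constant column minus the other columns
   of its group, all of which are kept.  Hence every column of P lies in the
   column space of \hat P, say P = \hat P D, and if (lam, alpha) solves the
   full system then (lam, D alpha) solves the reduced one: the first block is
   unchanged and \hat P^T lam consists of entries of P^T lam = 0. *)

Lemma rbf_solvable_colsub (R : rcfType) (k p q : nat) (Phi : 'M[R]_k)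
    (Q : 'M[R]_(k, p)) (f : 'I_q -> 'I_p) (F : 'cV[R]_k) :
  (Q^T <= (colsub f Q)^T)%MS -> rbf_solvable Phi Q F -> rbf_solvable Phi (colsub f Q) F.
Proof.
case/submxP=> D QD [lam [alpha]].
rewrite !mul_block_col !mul0mx !addr0 => /eq_col_mx[sol_top sol_bot].
have QE : Q = colsub f Q *m D^T by rewrite -[LHS]trmxK QD trmx_mul trmxK.
exists lam, (D^T *m alpha).
rewrite mul_block_col mul0mx addr0 mulmxA -QE sol_top trmx_mxsub mul_rowsub_mx sol_bot.
by congr col_mx; apply/matrixP => i j; rewrite !mxE.
Qed.

Lemma row_sub_colsub_enum (R : fieldType) (k N : nat) (K : pred 'I_N)
    (Q : 'M[R]_(k, N)) (j : 'I_N) :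
  j \in K -> (row j Q^T <= (colsub (fun i : 'I_#|K| => enum_val i) Q)^T)%MS.
Proof.
move=> Kj; apply: (eq_row_sub (enum_rank_in Kj j)); apply/rowP => i.
by rewrite !mxE enum_rankK_in.
Qed.

Lemma row_trmxE (T : Type) (p q : nat) (A : 'M[T]_(p, q)) (i : 'I_p) (j : 'I_q) :
  row j A^T 0 i = A i j.
Proof. by rewrite !mxE. Qed.

Lemma mhatS (m : nat -> nat) (h : nat) : mhat m h.+1 = (mhat m h + m h.+1)%N.
Proof. by rewrite /mhat big_nat_recr. Qed.

Lemma leq_mhat (m : nat -> nat) (a b : nat) : (a <= b)%N -> (mhat m a <= mhat m b)%N.
Proof.
elim: b => [|b IHb]; first by rewrite leqn0 => /eqP->.
rewrite leq_eqVlt => /orP[/eqP-> //|]; rewrite ltnS => /IHb.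
by rewrite mhatS => /leq_trans; apply; rewrite leq_addr.
Qed.

(* The 0-based coordinate range of the (h+1)-th categorical variable. *)
Definition onehot_block (nr nd : nat) (m : nat -> nat) (h l : nat) : bool :=
  (nr + nd + mhat m h <= l < nr + nd + mhat m h.+1)%N.

Section OneHotBlocks.

Variables (nr nd nc : nat) (m : nat -> nat).

Local Notation block := (onehot_block nr nd m).
Local Notation last_of h := (nr + nd + mhat m h.+1 - 1)%N.

Lemma onehot_block_uniq (h h' l : nat) : block h l -> block h' l -> h = h'.
Proof.
rewrite /onehot_block => /andP[lo hi] /andP[lo' hi'].
case: (ltngtP h h') => [hh'|h'h|//].
- by have := leq_mhat m hh'; lia.
- by have := leq_mhat m h'h; lia.
Qed.

Lemma onehot_block_last (h : nat) : (0 < m h.+1)%N -> block h (last_of h).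
Proof. by rewrite /onehot_block mhatS; lia. Qed.

Hypothesis m_gt0 : forall h, (1 <= h <= nc)%N -> (0 < m h)%N.

Lemma onehot_block_last_ord (h : 'I_nc) : block h (last_of h).
Proof. by apply/onehot_block_last/m_gt0; rewrite ltn_ord. Qed.

Lemma deleted_col_onehot_block (N : nat) (c : 'I_N) (h : 'I_nc) :
  block h c -> deleted_col nr nd nc m c -> c = last_of h :> nat.
Proof.
move=> bc /existsP[h' /eqP ch']; rewrite ch' in bc *.
by rewrite (onehot_block_uniq (onehot_block_last_ord h') bc).
Qed.

Lemma kept_col_ge (N : nat) (c : 'I_N) :
  (nr + nd + mhat m nc <= c)%N -> kept_cols nr nd nc m c.
Proof.
move=> cge; apply/negP => /existsP[h /eqP ch].
have := onehot_block_last_ord h; have := leq_mhat m (ltn_ord h).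
by rewrite /onehot_block; lia.
Qed.

End OneHotBlocks.

Section DeletedColumns.

Variables (R : rcfType) (nr nd nc : nat) (m : nat -> nat) (k : nat).
Let n := (nr + nd + mhat m nc)%N.
Variable x : 'I_k -> 'rV[R]_n.

Lemma P_matEl (i : 'I_k) (l : 'I_n) : P_mat x i (lshift 1 l) = x i 0 l.
Proof. by rewrite /P_mat row_mxEl mxE. Qed.

Lemma P_matEr (i : 'I_k) (j : 'I_1) : P_mat x i (rshift n j) = 1.
Proof. by rewrite /P_mat row_mxEr mxE. Qed.

Hypothesis onehot_sum : forall (i : 'I_k) (h : 'I_nc),
  \sum_(l < n | onehot_block nr nd m h l) x i 0 l = 1.

Lemma P_mat_onehot_row (h : 'I_nc) (j : 'I_n) : onehot_block nr nd m h j ->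
  row (lshift 1 j) (P_mat x)^T = row (rshift n ord0) (P_mat x)^T
    - \sum_(l < n | onehot_block nr nd m h l && (l != j)) row (lshift 1 l) (P_mat x)^T.
Proof.
move=> bj; apply/rowP => i; rewrite [RHS]mxE [X in _ + X]mxE summxE !row_trmxE P_matEl P_matEr.
rewrite -(onehot_sum i h) (bigD1 j) //=.
by under [X in _ - X]eq_bigr do rewrite row_trmxE P_matEl; rewrite addrK.
Qed.

Hypothesis m_gt0 : forall h, (1 <= h <= nc)%N -> (0 < m h)%N.

Lemma P_mat_sub_Phat : ((P_mat x)^T <= (Phat_mat nr nd nc m (P_mat x))^T)%MS.
Proof.
have kept_sub j : kept_cols nr nd nc m j ->
    (row j (P_mat x)^T <= (Phat_mat nr nd nc m (P_mat x))^T)%MS.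
  by move=> Kj; apply: row_sub_colsub_enum; rewrite unfold_in.
apply/row_subP => j; have [|] := boolP (kept_cols nr nd nc m j); first exact: kept_sub.
move/negbNE/existsP => [h /eqP jh].
have bj : onehot_block nr nd m h j by rewrite jh onehot_block_last_ord.
have jn : (j < n)%N.
  by move: bj; rewrite /onehot_block /n; have := leq_mhat m (ltn_ord h); lia.
pose j' := Ordinal jn; have bj' : onehot_block nr nd m h j' := bj.
have -> : j = lshift 1 j' by apply: val_inj.
rewrite (P_mat_onehot_row bj'); apply: addmx_sub.
  by apply/kept_sub/kept_col_ge; rewrite //= addn0.
rewrite -scaleN1r; apply/scalemx_sub/summx_sub => l /andP[bl /eqP lj].
apply/kept_sub/negP => Dl; apply: lj; apply: val_inj => /=.
by rewrite (deleted_col_onehot_block m_gt0 bl Dl) jh.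
Qed.

End DeletedColumns.

Theorem proposition2 (R : realType) (nr nd nc : nat) (m : nat -> nat) (k : nat)
  (x : 'I_k -> 'rV[R]_(nr + nd + mhat m nc)) (phi : R -> R) (F : 'cV[R]_k) :
  (0 < nc)%N ->
  (forall h : nat, (1 <= h <= nc)%N -> (0 < m h)%N) ->
  (forall (i : 'I_k) (h : nat), (1 <= h <= nc)%N ->
     (forall l : 'I_(nr + nd + mhat m nc),
        (nr + nd + mhat m h.-1 <= l < nr + nd + mhat m h)%N ->
        x i 0 l = 0 \/ x i 0 l = 1) /\
     \sum_(l < nr + nd + mhat m nc | (nr + nd + mhat m h.-1 <= l < nr + nd + mhat m h)%N)
        x i 0 l = 1) ->
  rbf_solvable (Phi_mat phi x) (P_mat x) F ->
  rbf_solvable (Phi_mat phi x) (Phat_mat nr nd nc m (P_mat x)) F.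
Proof.
move=> _ m_gt0 onehot; apply: rbf_solvable_colsub; apply: P_mat_sub_Phat => // i h.
by have [_ ] := onehot i h.+1 (ltn_ord h).
Qed.
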